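(* For $\theta>0$ and an integer $n\ge1$, let $K_n(\theta)$ be a random variable with $P\{K_n(\theta)=k\}=|S_n^k|\theta^k/\theta_{(n)}$, $k=1,\dots,n$, where $\theta_{(n)}=\theta(\theta+1)\cdots(\theta+n-1)$ and $|S_n^k|$ is the coefficient of $\theta^k$ in $\theta_{(n)}$. Then, as $\theta\to\infty$, in probability: (Case A, $n$ fixed) $K_n(\theta)\to n$; (Case B, $n=n(\theta)\to\infty$, $\theta/n\to\infty$) $K_n(\theta)/n\to1$; (Case C, $n=n(\theta)\to\infty$, $\theta/n\to c\in(0,\infty)$) $K_n(\theta)/n\to\log\big(1+\frac1c\big)^c$; (Case D, $n=n(\theta)\to\infty$, $\theta/n\to0$) $K_n(\theta)/(\theta\log(n/\theta))\to1$.
   Context: $K_n(\theta)$ is the number of distinct alleles in a sample of size $n$ from a $PD(\theta)$ population. *)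

From HB Require Import structures.
From mathcomp Require Import all_boot all_order all_algebra.
From mathcomp Require Import all_classical all_reals all_analysis.
Set Implicit Arguments. Unset Strict Implicit. Unset Printing Implicit Defensive.
Import Order.TTheory GRing.Theory Num.Theory.
Import numFieldNormedType.Exports.
Local Open Scope classical_set_scope.
Local Open Scope ring_scope.

Definition rising_poly (R : realType) (n : nat) : {poly R} :=
  \prod_(i < n) ('X + (i%:R)%:P).

Definition stirling1u (R : realType) (n k : nat) : R := (rising_poly R n)`_k.

Definition rising (R : realType) (theta : R) (n : nat) : R :=
  (rising_poly R n).[theta].

Definition Kpmf (R : realType) (theta : R) (n k : nat) : R :=
  stirling1u R n k * theta ^+ k / rising theta n.

(* P{ |K_n(theta)/a - L| > eps } for K_n(theta) with the law above
   (support {1,...,n}). *)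
Definition Kdev (R : realType) (theta : R) (n : nat) (a L eps : R) : R :=
  \sum_(1 <= k < n.+1 | eps < `| k%:R / a - L |) Kpmf theta n k.

Definition K_cvg_in_prob (R : realType) (n : R -> nat) (a : R -> R) (L : R)
  : Prop :=
  forall eps : R, 0 < eps ->
    (fun theta => Kdev theta (n theta) (a theta) L eps) @ +oo --> (0 : R).

From HB Require Import structures.
From mathcomp Require Import all_boot all_order all_algebra.
From mathcomp Require Import all_classical all_reals all_analysis.
From mathcomp Require Import ring lra.
Set Implicit Arguments.
Unset Strict Implicit.
Unset Printing Implicit Defensive.

Import Order.TTheory GRing.Theory Num.Theory.
Import numFieldNormedType.Exports.
Local Open Scope classical_set_scope.
Local Open Scope ring_scope.

(* Since [\sum_k |S_n^k| θ^k = θ (θ + 1) ... (θ + n - 1)], multiplying by the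
   factor [θ + n] gives a recurrence for the first two moments of [K_n(θ)]:
   its mean is [\sum_(i < n) θ / (θ + i)] and its variance
   [\sum_(i < n) θ i / (θ + i)^2].  By Chebyshev's inequality, [K_n(θ) / a]
   converges in probability to [L] as soon as the variance is [o(a^2)] and
   the mean is [L a + o(a)].  The variance is at most both the mean and
   [n] minus the mean, so it is negligible when [a -> oo], and comparing the
   mean with an integral gives
   [θ ln (1 + n / θ) <= mean <= θ ln (1 + n / θ) + 1],
   from which the asymptotics of the mean in the four regimes follow. *)

Section PolyMoment.
Variable R : comNzRingType.
Implicit Types (p : {poly R}) (x c : R).

Definition poly_moment p x (m : nat) : R :=
  \sum_(0 <= k < size p) p`_k * x ^+ k * k%:R ^+ m.

Lemma poly_moment_widen p x m N : (size p <= N)%N ->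
  \sum_(0 <= k < N) p`_k * x ^+ k * k%:R ^+ m = poly_moment p x m.
Proof.
move=> pN; rewrite /poly_moment (big_cat_nat (leq0n (size p)) pN) /=.
rewrite [X in _ + X]big_nat_cond [X in _ + X]big1 ?addr0 // => k.
by case/andP=> /andP[pk _] _; rewrite nth_default // !mul0r.
Qed.

Lemma poly_moment_mulXaddC p x c m : poly_moment (p * ('X + c%:P)) x m =
  x * \sum_(0 <= j < size p) p`_j * x ^+ j * j.+1%:R ^+ m + c * poly_moment p x m.
Proof.
have size_pXc : (size (p * ('X + c%:P))%R <= (size p).+1)%N.
  by apply: (leq_trans (size_polyMleq _ _)); rewrite size_XaddC addn2.
rewrite -(poly_moment_widen x m size_pXc).
under eq_bigr do rewrite mulrDr coefD coefMX coefMC !mulrDl.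
rewrite big_split /= big_nat_recl // eqxx !mul0r add0r.
rewrite -(poly_moment_widen x m (leqnSn (size p))) !big_distrr /=.
by congr (_ + _); apply: eq_bigr => i _ /=; rewrite ?exprS; ring.
Qed.

Lemma poly_moment0_mulXaddC p x c :
  poly_moment (p * ('X + c%:P)) x 0 = (x + c) * poly_moment p x 0.
Proof. by rewrite poly_moment_mulXaddC mulrDl. Qed.

Lemma poly_moment1_mulXaddC p x c : poly_moment (p * ('X + c%:P)) x 1 =
  (x + c) * poly_moment p x 1 + x * poly_moment p x 0.
Proof.
rewrite poly_moment_mulXaddC.
have -> : \sum_(0 <= j < size p) p`_j * x ^+ j * j.+1%:R ^+ 1 =
    poly_moment p x 1 + poly_moment p x 0.
  rewrite /poly_moment -big_split /=.
  by apply: eq_bigr => j _; rewrite -addn1 natrD; ring.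
ring.
Qed.

Lemma poly_moment2_mulXaddC p x c : poly_moment (p * ('X + c%:P)) x 2 =
  (x + c) * poly_moment p x 2 + x * (2 * poly_moment p x 1 + poly_moment p x 0).
Proof.
rewrite poly_moment_mulXaddC.
have -> : \sum_(0 <= j < size p) p`_j * x ^+ j * j.+1%:R ^+ 2 =
    poly_moment p x 2 + 2 * poly_moment p x 1 + poly_moment p x 0.
  rewrite /poly_moment big_distrr -!big_split /=; apply: eq_bigr => j _.
  by rewrite -addn1 natrD; ring.
ring.
Qed.

Lemma poly_moment_quadratic p x N a b d : (size p <= N)%N ->
  \sum_(0 <= k < N) p`_k * x ^+ k * (a * k%:R ^+ 2 + b * k%:R + d) =
  a * poly_moment p x 2 + b * poly_moment p x 1 + d * poly_moment p x 0.
Proof.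
move=> pN; rewrite -!(poly_moment_widen x _ pN) !big_distrr -!big_split /=.
by apply: eq_bigr => k _; rewrite expr1 expr0; ring.
Qed.

End PolyMoment.

Section RisingMoments.
Variable R : realType.
Implicit Types (θ : R) (n : nat).

Lemma rising_polyS n : rising_poly R n.+1 = rising_poly R n * ('X + n%:R%:P).
Proof. by rewrite /rising_poly big_ord_recr. Qed.

Lemma size_rising_poly n : (size (rising_poly R n) <= n.+1)%N.
Proof.
elim: n => [|n IHn]; first by rewrite /rising_poly big_ord0 size_poly1.
rewrite rising_polyS; apply: (leq_trans (size_polyMleq _ _)).
by rewrite size_XaddC addn2.
Qed.

Lemma stirling1u_ge0 n k : 0 <= stirling1u R n k.
Proof.
rewrite /stirling1u; elim: n k => [|n IHn] k.
  by rewrite /rising_poly big_ord0 coef1; case: (k == 0)%N.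
rewrite rising_polyS mulrDr coefD coefMX coefMC.
by apply: addr_ge0; [case: (k == 0)%N | apply: mulr_ge0].
Qed.

Lemma rising_poly_moment0 θ n : rising θ n = poly_moment (rising_poly R n) θ 0.
Proof.
rewrite /rising horner_coef /poly_moment big_mkord.
by apply: eq_bigr => k _; rewrite expr0 mulr1.
Qed.

(* [K_n(θ)] has the law of a sum of independent Bernoulli variables of
   parameters [θ / (θ + i)], [i < n]. *)
Definition Kmean θ n := \sum_(0 <= i < n) θ / (θ + i%:R).
Definition Kvar θ n := \sum_(0 <= i < n) θ / (θ + i%:R) * (i%:R / (θ + i%:R)).

Lemma rising_poly_moments θ n : 0 < θ ->
  [/\ 0 < rising θ n,
      poly_moment (rising_poly R n) θ 1 = Kmean θ n * rising θ n &
      poly_moment (rising_poly R n) θ 2 = (Kvar θ n + Kmean θ n ^+ 2) * rising θ n].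
Proof.
move=> θ_gt0; rewrite rising_poly_moment0.
elim: n => [|n [IH0 IH1 IH2]].
  rewrite /poly_moment /Kmean /Kvar /rising_poly big_ord0 size_poly1 !big_nat1.
  by rewrite !big_geq // coef1 !expr0 !mulr1 !expr0n /= !mulr0 add0r ltr01.
have θn_gt0 : 0 < θ + n%:R by rewrite ltr_wpDr.
rewrite rising_polyS poly_moment0_mulXaddC poly_moment1_mulXaddC.
rewrite poly_moment2_mulXaddC /Kmean /Kvar !big_nat_recr //= -/(Kmean θ n) -/(Kvar θ n).
rewrite IH1 IH2; split; first exact: mulr_gt0.
  by field; rewrite gt_eqF.
by field; rewrite gt_eqF.
Qed.

Lemma Kpmf_ge0 θ n k : 0 < θ -> 0 <= Kpmf θ n k.
Proof.
move=> θ_gt0; have [rising_gt0 _ _] := rising_poly_moments n θ_gt0.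
by rewrite /Kpmf divr_ge0 ?mulr_ge0 ?stirling1u_ge0 ?exprn_ge0 ?ltW.
Qed.

Lemma sum_Kpmf_quadratic θ n a b d : 0 < θ ->
  \sum_(0 <= k < n.+1) Kpmf θ n k * (a * k%:R ^+ 2 + b * k%:R + d) =
  a * (Kvar θ n + Kmean θ n ^+ 2) + b * Kmean θ n + d.
Proof.
move=> θ_gt0; have [r_gt0 M1 M2] := rising_poly_moments n θ_gt0.
rewrite (eq_bigr (fun k => (rising_poly R n)`_k * θ ^+ k *
    (a * k%:R ^+ 2 + b * k%:R + d) / rising θ n)); last first.
  by move=> k _; rewrite /Kpmf /stirling1u mulrAC.
rewrite -big_distrl /= poly_moment_quadratic ?size_rising_poly //.
by rewrite M1 M2 -rising_poly_moment0; field; rewrite gt_eqF.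
Qed.

Lemma Kdev_ge0 θ n a L eps : 0 < θ -> 0 <= Kdev θ n a L eps.
Proof. by move=> θ_gt0; apply: sumr_ge0 => k _; apply: Kpmf_ge0. Qed.

Lemma Kdev_chebyshev θ n a L eps : 0 < θ -> 0 < eps -> 0 < a ->
  Kdev θ n a L eps <= (Kvar θ n / a ^+ 2 + (Kmean θ n / a - L) ^+ 2) / eps ^+ 2.
Proof.
move=> θ_gt0 eps_gt0 a_gt0.
pose G k := Kpmf θ n k * ((k%:R / a - L) ^+ 2 / eps ^+ 2).
have G_ge0 k : 0 <= G k by rewrite mulr_ge0 ?Kpmf_ge0 ?divr_ge0 ?sqr_ge0 ?exprn_ge0 ?ltW.
apply: (@le_trans _ _ (\sum_(0 <= k < n.+1) G k)).
  rewrite /Kdev big_mkcond (@big_ltn _ _ _ 0 n.+1) //=.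
  apply: (@le_trans _ _ (\sum_(1 <= k < n.+1) G k)); last by rewrite lerDr.
  apply: ler_sum => k _; case: ifP => [dev_k|_]; last exact: G_ge0.
  rewrite -[leLHS]mulr1 ler_wpM2l ?Kpmf_ge0 // ler_pdivlMr ?exprn_gt0 // mul1r.
  rewrite -[X in _ <= X]real_normK ?num_real // !expr2.
  by apply: ler_pM; rewrite ?ltW.
rewrite (eq_bigr (fun k => Kpmf θ n k * ((a ^+ 2 * eps ^+ 2)^-1 * k%:R ^+ 2
    + (- 2 * L / (a * eps ^+ 2)) * k%:R + L ^+ 2 / eps ^+ 2))); last first.
  by move=> k _; congr (_ * _); field; rewrite !gt_eqF.
rewrite sum_Kpmf_quadratic // le_eqVlt; apply/predU1l.
by field; rewrite !gt_eqF.
Qed.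

End RisingMoments.

Lemma ln_succ_sub_bounds (R : realType) (x : R) : 0 < x ->
  (x + 1)^-1 <= ln (x + 1) - ln x <= x^-1.
Proof.
move=> x_gt0; have x1_gt0 : 0 < x + 1 by lra.
apply/andP; split.
- have x_eq : x = (x + 1) * (1 - (x + 1)^-1) by field; rewrite gt_eqF.
  have inv_lt1 : (x + 1)^-1 < 1 by rewrite invf_lt1 //; lra.
  rewrite [X in _ - ln X]x_eq lnM ?posrE ?subr_gt0 //.
  have : ln (1 - (x + 1)^-1) <= - (x + 1)^-1 by rewrite le_ln1Dx // ltrN2.
  lra.
- have x1_eq : x + 1 = x * (1 + x^-1) by field; rewrite gt_eqF.
  rewrite x1_eq lnM ?posrE ?addr_gt0 ?invr_gt0 //.
  have : ln (1 + x^-1) <= x^-1.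
    by rewrite le_ln1Dx // (@lt_trans _ _ 0) ?ltrN10 ?invr_gt0.
  lra.
Qed.

Section KmeanBounds.
Variables (R : realType) (θ : R).
Hypothesis θ_gt0 : 0 < θ.
Implicit Type n : nat.

Let θi_gt0 i : 0 < θ + i%:R. Proof. by rewrite ltr_wpDr. Qed.

Let θi_frac_ge0 i : 0 <= θ / (θ + i%:R).
Proof. by rewrite divr_ge0 ?ltW ?θi_gt0. Qed.

Let i_frac_ge0 i : 0 <= i%:R / (θ + i%:R).
Proof. by rewrite divr_ge0 ?ler0n ?ltW ?θi_gt0. Qed.

Let i_frac_le1 i : i%:R / (θ + i%:R) <= 1.
Proof. by rewrite ler_pdivrMr ?θi_gt0 // mul1r lerDr ltW. Qed.

Lemma Kmean_ln_bounds n :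
  θ * ln (1 + n%:R / θ) <= Kmean θ n <= θ * ln (1 + n%:R / θ) + 1.
Proof.
pose u i := θ / (θ + i%:R).
have ln_telescope : θ * ln (1 + n%:R / θ) =
    \sum_(0 <= i < n) θ * (ln (θ + i.+1%:R) - ln (θ + i%:R)).
  rewrite -big_distrr /= telescope_sumr // addr0 -ln_div ?posrE //.
  by congr (θ * ln _); field; rewrite gt_eqF.
have ln_step i : u i.+1 <= θ * (ln (θ + i.+1%:R) - ln (θ + i%:R)) <= u i.
  have /andP[lo hi] := ln_succ_sub_bounds (θi_gt0 i).
  by rewrite /u -natr1 addrA !ler_pM2l // lo hi.
have u_telescope : Kmean θ n - \sum_(0 <= i < n) u i.+1 = 1 - u n.
  rewrite /Kmean -sumrB (eq_bigr (fun i => - (u i.+1 - u i))); last first.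
    by move=> i _; rewrite opprB.
  by rewrite sumrN telescope_sumr // /u addr0 divff ?gt_eqF // opprB.
have lower : \sum_(0 <= i < n) u i.+1 <= θ * ln (1 + n%:R / θ).
  by rewrite ln_telescope; apply: ler_sum => i _; case/andP: (ln_step i).
have upper : θ * ln (1 + n%:R / θ) <= Kmean θ n.
  by rewrite ln_telescope; apply: ler_sum => i _; case/andP: (ln_step i).
have := θi_frac_ge0 n; rewrite -/(u n); lra.
Qed.

Lemma Kmean_sub_ln_bounds n : (0 < n)%N ->
  0 <= Kmean θ n - θ * ln (n%:R / θ) <= θ * (θ / n%:R) + 1.
Proof.
move=> n_gt0; have nR_gt0 : (0 : R) < n%:R by rewrite ltr0n.
have ln_split : θ * ln (1 + n%:R / θ) = θ * ln (n%:R / θ) + θ * ln (1 + θ / n%:R).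
  rewrite -mulrDr -lnM ?posrE ?addr_gt0 ?divr_gt0 //.
  by congr (θ * ln _); field; rewrite !gt_eqF.
have err_ge0 : 0 <= θ * ln (1 + θ / n%:R).
  by apply: mulr_ge0; [exact: ltW | apply: ln_ge0; rewrite lerDl divr_ge0 ?ltW].
have err_le : θ * ln (1 + θ / n%:R) <= θ * (θ / n%:R).
  by rewrite ler_pM2l // le_ln1Dx // (@lt_trans _ _ 0) ?ltrN10 ?divr_gt0.
have /andP[lo hi] := Kmean_ln_bounds n.
apply/andP; split; lra.
Qed.

Lemma Kmean_div_ln_ratio_dist n : (0 < n)%N -> ln 2 <= ln (n%:R / θ) ->
  `|Kmean θ n / (θ * ln (n%:R / θ)) - 1| <= (θ / n%:R + 1 / θ) / ln 2.
Proof.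
move=> n_gt0 ln_ge; have ln2_gt0 : (0 : R) < ln 2 by rewrite ln_gt0 ?ltr1n.
have nR_gt0 : (0 : R) < n%:R by rewrite ltr0n.
set a := θ * ln (n%:R / θ).
have a_ge : θ * ln 2 <= a by rewrite ler_pM2l.
have a_gt0 : 0 < a by apply: lt_le_trans a_ge; rewrite mulr_gt0.
have /andP[lo hi] := Kmean_sub_ln_bounds n_gt0.
rewrite -[X in `|_ - X|](divff (lt0r_neq0 a_gt0)) -mulrBl normrM ger0_norm //.
rewrite gtr0_norm ?invr_gt0 // ler_pdivrMr // (le_trans hi) //.
have -> : θ * (θ / n%:R) + 1 = (θ / n%:R + 1 / θ) / ln 2 * (θ * ln 2).
  by field; rewrite !gt_eqF.
by rewrite ler_wpM2l // divr_ge0 ?addr_ge0 ?divr_ge0 ?ltW.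
Qed.

Lemma natr_sub_Kmean n : n%:R - Kmean θ n = \sum_(0 <= i < n) i%:R / (θ + i%:R).
Proof.
have -> : n%:R = \sum_(0 <= i < n) (1 : R) by rewrite sumr_const_nat subn0.
rewrite /Kmean -sumrB; apply: eq_bigr => i _.
by field; rewrite gt_eqF ?θi_gt0.
Qed.

Lemma Kmean_le n : Kmean θ n <= n%:R.
Proof. by rewrite -subr_ge0 natr_sub_Kmean sumr_ge0. Qed.

Lemma sub_Kmean_le n : n%:R - Kmean θ n <= n%:R ^+ 2 / θ.
Proof.
have -> : n%:R ^+ 2 / θ = \sum_(0 <= i < n) (n%:R / θ) :> R.
  by rewrite sumr_const_nat subn0 expr2 -mulrA mulr_natl.
rewrite natr_sub_Kmean.
apply: ler_sum_nat => i /andP[_ lt_in].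
rewrite ler_pdivrMr ?θi_gt0 // mulrAC ler_pdivlMr //.
apply: (@le_trans _ _ (n%:R * θ)).
  by apply: ler_wpM2r; [exact: ltW | rewrite ler_nat ltnW].
by rewrite mulrDr lerDl mulr_ge0.
Qed.

Lemma Kvar_ge0 n : 0 <= Kvar θ n.
Proof. by apply: sumr_ge0 => i _; apply: mulr_ge0. Qed.

Lemma Kvar_le_Kmean n : Kvar θ n <= Kmean θ n.
Proof. by apply: ler_sum => i _; rewrite ler_piMr. Qed.

Lemma Kvar_le_sub_Kmean n : Kvar θ n <= n%:R - Kmean θ n.
Proof.
rewrite natr_sub_Kmean; apply: ler_sum => i _.
by rewrite ler_piMl ?ler_pdivrMr ?θi_gt0 // mul1r lerDl.
Qed.

End KmeanBounds.

Section Limits.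
Variable R : realType.

Lemma cvgyV T (F : set_system T) {FF : Filter F} (g : T -> R) :
  g @ F --> +oo -> (fun t => (g t)^-1) @ F --> 0.
Proof.
move=> g_oo; apply/gtr0_cvgV0 => //.
by move/cvgryPgt : g_oo; apply.
Qed.

Lemma cvg_div_pinfty (c : R) : (fun t : R => c / t) @ +oo --> 0.
Proof.
rewrite -(mulr0 c); apply: cvgM; first exact: cvg_cst.
by apply: cvgyV; apply/cvgryPge => A; apply: nbhs_pinfty_ge; rewrite num_real.
Qed.

Lemma cvg_dist_squeeze T (F : set_system T) {FF : Filter F} (f h g : T -> R) (l : R) :
  (\forall t \near F, `|f t - h t| <= g t) -> h @ F --> l -> g @ F --> 0 ->
  f @ F --> l.
Proof.
move=> dist_le h_l g_0.
have hBg : (fun t => h t - g t) @ F --> l by rewrite -[l]subr0; apply: cvgB.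
have hDg : (fun t => h t + g t) @ F --> l by rewrite -[l]addr0; apply: cvgD.
apply: (squeeze_cvgr _ hBg hDg).
by apply: filterS dist_le => t; rewrite -ler_distl.
Qed.

End Limits.

Section KLimits.
Variable R : realType.
Implicit Types (n : R -> nat) (a : R -> R) (L : R).

Let pinfty_gt0 : \forall t \near +oo, (0 : R) < t.
Proof. by apply: nbhs_pinfty_gt; rewrite num_real. Qed.

Lemma K_cvg_in_prob_of_moments n a L : (\forall t \near +oo, 0 < a t) ->
  (fun t => Kvar t (n t) / a t ^+ 2) @ +oo --> 0 ->
  (fun t => Kmean t (n t) / a t) @ +oo --> L ->
  K_cvg_in_prob n a L.
Proof.
move=> a_gt0 var_0 mean_L eps eps_gt0.
pose dev t := Kmean t (n t) / a t - L.
have bound_0 : (fun t => (Kvar t (n t) / a t ^+ 2 + dev t * dev t) / eps ^+ 2)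
    @ +oo --> 0.
  suff : (fun t => (Kvar t (n t) / a t ^+ 2 + dev t * dev t) / eps ^+ 2)
      @ +oo --> (0 + (L - L) * (L - L)) / eps ^+ 2.
    by rewrite subrr mulr0 addr0 mul0r.
  apply: cvgM; last exact: cvg_cst.
  by apply: cvgD => //; apply: cvgM; apply: cvgB => //; exact: cvg_cst.
apply: (squeeze_cvgr _ (cvg_cst 0) bound_0).
near=> t.
have t_gt0 : 0 < t by near: t; exact: pinfty_gt0.
have at_gt0 : 0 < a t by near: t.
by rewrite -expr2 Kdev_ge0 ?Kdev_chebyshev.
Unshelve. all: end_near.
Qed.

(* Since [Kvar <= Kmean], the variance term vanishes as soon as [a] grows. *)
Lemma K_cvg_in_prob_of_mean n a L : a @ +oo --> +oo ->
  (fun t => Kmean t (n t) / a t) @ +oo --> L -> K_cvg_in_prob n a L.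
Proof.
move=> a_oo mean_L.
have a_gt0 : \forall t \near +oo, 0 < a t by move/cvgryPgt : a_oo; apply.
apply: K_cvg_in_prob_of_moments => //.
have bound_0 : (fun t => Kmean t (n t) / a t * (a t)^-1) @ +oo --> 0.
  by rewrite -(mulr0 L); apply: cvgM => //; exact: cvgyV.
apply: (squeeze_cvgr _ (cvg_cst 0) bound_0).
near=> t.
have t_gt0 : 0 < t by near: t; exact: pinfty_gt0.
have at_gt0 : 0 < a t by near: t.
rewrite divr_ge0 ?exprn_ge0 ?Kvar_ge0 ?(ltW at_gt0) //= expr2 invfM mulrA.
by rewrite !ler_pM2r ?invr_gt0 // Kvar_le_Kmean.
Unshelve. all: end_near.
Qed.

Lemma K_cvg_in_prob_n_fixed (n : nat) :
  K_cvg_in_prob (fun _ : R => n) (fun _ => 1) n%:R.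
Proof.
apply: K_cvg_in_prob_of_moments.
- by near=> t.
- apply: (squeeze_cvgr _ (cvg_cst 0) (cvg_div_pinfty (n%:R ^+ 2))).
  near=> t.
  have t_gt0 : 0 < t by near: t; exact: pinfty_gt0.
  rewrite expr1n divr1 Kvar_ge0 //=.
  exact: le_trans (Kvar_le_sub_Kmean _ _) (sub_Kmean_le _ _).
- apply: (cvg_dist_squeeze _ _ (cvg_div_pinfty (n%:R ^+ 2))); last exact: cvg_cst.
  near=> t.
  have t_gt0 : 0 < t by near: t; exact: pinfty_gt0.
  rewrite divr1 distrC ger0_norm ?subr_ge0 ?Kmean_le //.
  exact: sub_Kmean_le.
Unshelve. all: end_near.
Qed.

Lemma K_cvg_in_prob_n_small n :
  (fun t => (n t)%:R : R) @ +oo --> +oo ->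
  (fun t => t / (n t)%:R) @ +oo --> +oo ->
  K_cvg_in_prob n (fun t => (n t)%:R) 1.
Proof.
move=> n_oo ratio_oo; apply: K_cvg_in_prob_of_mean => //.
apply: (cvg_dist_squeeze _ _ (cvgyV ratio_oo)); last exact: cvg_cst.
near=> t.
have t_gt0 : 0 < t by near: t; exact: pinfty_gt0.
have nt_gt0 : 0 < (n t)%:R :> R by near: t; move/cvgryPgt : n_oo; apply.
rewrite invf_div distrC -[X in `|X - _|](divff (lt0r_neq0 nt_gt0)) -mulrBl.
rewrite ger0_norm ?divr_ge0 ?subr_ge0 ?Kmean_le ?(ltW nt_gt0) // ler_pdivrMr //.
by rewrite (le_trans (sub_Kmean_le t_gt0 _)) // expr2 mulrAC.
Unshelve. all: end_near.
Qed.

Lemma K_cvg_in_prob_n_linear n (c : R) : 0 < c ->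
  (fun t => (n t)%:R : R) @ +oo --> +oo ->
  (fun t => t / (n t)%:R) @ +oo --> c ->
  K_cvg_in_prob n (fun t => (n t)%:R) (c * ln (1 + c^-1)).
Proof.
move=> c_gt0 n_oo ratio_c; apply: K_cvg_in_prob_of_mean => //.
pose G t := t / (n t)%:R * ln (1 + (t / (n t)%:R)^-1).
have G_cvg : G @ +oo --> c * ln (1 + c^-1).
  apply: cvgM => //; apply: continuous_cvg.
    by apply: continuous_ln; rewrite addr_gt0 ?invr_gt0.
  by apply: cvgD; [exact: cvg_cst | apply: cvgV => //; rewrite gt_eqF].
apply: (cvg_dist_squeeze _ G_cvg (cvgyV n_oo)).
near=> t.
have t_gt0 : 0 < t by near: t; exact: pinfty_gt0.
have nt_gt0 : 0 < (n t)%:R :> R by near: t; move/cvgryPgt : n_oo; apply.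
have /andP[lo hi] := Kmean_ln_bounds t_gt0 (n t).
rewrite /G invf_div mulrAC -mulrBl normrM ger0_norm ?subr_ge0 //.
rewrite gtr0_norm ?invr_gt0 // -[X in _ <= X]mul1r ler_pM2r ?invr_gt0 //; lra.
Unshelve. all: end_near.
Qed.

Lemma K_cvg_in_prob_n_large n :
  (fun t => (n t)%:R : R) @ +oo --> +oo ->
  (fun t => t / (n t)%:R) @ +oo --> 0 ->
  K_cvg_in_prob n (fun t => t * ln ((n t)%:R / t)) 1.
Proof.
move=> n_oo ratio_0.
have ln2_gt0 : (0 : R) < ln 2 by rewrite ln_gt0 ?ltr1n.
have regime : \forall t \near +oo,
    [/\ 0 < t, (0 < n t)%N & ln 2 <= ln ((n t)%:R / t)].
  near=> t.
  have t_gt0 : 0 < t by near: t; exact: pinfty_gt0.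
  have nt_gt0 : 0 < (n t)%:R :> R by near: t; move/cvgryPgt : n_oo; apply.
  have ratio_le : t / (n t)%:R <= 2^-1.
    have : `|t / (n t)%:R| <= 2^-1.
      by near: t; apply: (cvgr0_norm_le _ ratio_0); rewrite invr_gt0.
    by rewrite ger0_norm // divr_ge0 ?ltW.
  split => //; first by rewrite -(ltr0n R).
  rewrite ler_ln ?posrE ?divr_gt0 // -invf_div -[2]invrK.
  by rewrite lef_pV2 ?posrE ?invr_gt0 ?divr_gt0.
apply: K_cvg_in_prob_of_mean.
  apply: (@ger_cvgy _ _ _ _ (fun t => t * ln 2)).
    by apply: filterS regime => t [t_gt0 _ ln_le]; rewrite ler_pM2l.
  apply/cvgryPge => A.
  by apply: filterS (nbhs_pinfty_ge (num_real (A / ln 2))) => t; rewrite ler_pdivrMr.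
pose g t := (t / (n t)%:R + 1 / t) / ln 2.
have g_0 : g @ +oo --> 0.
  suff : g @ +oo --> (0 + 0) / ln 2 by rewrite addr0 mul0r.
  by apply: cvgM; [apply: cvgD => //; exact: cvg_div_pinfty | exact: cvg_cst].
apply: (cvg_dist_squeeze _ _ g_0); last exact: cvg_cst.
apply: filterS regime => t [t_gt0 nt_gt0 ln_ge].
exact: Kmean_div_ln_ratio_dist.
Unshelve. all: end_near.
Qed.

End KLimits.

Theorem corollary4p1 (R : realType) :
  (forall n : nat, (1 <= n)%N ->
     K_cvg_in_prob (fun _ : R => n) (fun _ => 1) n%:R) /\
  (forall n : R -> nat,
     (fun t => (n t)%:R : R) @ +oo --> +oo ->
     (fun t => t / (n t)%:R) @ +oo --> +oo ->
     K_cvg_in_prob n (fun t => (n t)%:R) 1) /\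
  (forall (n : R -> nat) (c : R), 0 < c ->
     (fun t => (n t)%:R : R) @ +oo --> +oo ->
     (fun t => t / (n t)%:R) @ +oo --> c ->
     K_cvg_in_prob n (fun t => (n t)%:R) (ln ((1 + c^-1) `^ c))) /\
  (forall n : R -> nat,
     (fun t => (n t)%:R : R) @ +oo --> +oo ->
     (fun t => t / (n t)%:R) @ +oo --> (0 : R) ->
     K_cvg_in_prob n (fun t => t * ln ((n t)%:R / t)) 1).
Proof.
split; first by move=> n _; exact: K_cvg_in_prob_n_fixed.
split; first exact: K_cvg_in_prob_n_small.
split; first by move=> n c; rewrite ln_powR; exact: K_cvg_in_prob_n_linear.
exact: K_cvg_in_prob_n_large.
Qed.
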